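(* Let $A=\langle Q,\delta,\gamma,F\rangle$ be a pomset automaton and let $q\xrightarrow{U}_A q'$ be a trace that is non-trivial, i.e., it is not the case that $U=1$ and $q'=q$. If $q=\bot$ or $q=\top$, then $q'=\bot$.
   Context: Fix a finite alphabet $\Sigma$; pomsets are isomorphism classes of $\Sigma$-labelled posets, $1$ is the empty pomset, $a\in\Sigma$ the one-point pomset, $U\cdot V$ and $U\parallel V$ are sequential and parallel composition, and $\mathsf{Pom}^{\mathsf{sp}}$ is the smallest set containing $1$ and all $a$ closed under both. A pomset automaton (PA) is $A=\langle Q,\delta,\gamma,F\rangle$ with $F\subseteq Q$, $\delta:Q\times\Sigma\to Q$, $\gamma:Q\times Q\times Q\to Q$; every PA has distinguished states $\bot\in Q\setminus F$ and $\top\in F$ with $\delta(\bot,a)=\delta(\top,a)=\bot$ for all $a\in\Sigma$ and $\gamma(\bot,r,s)=\gamma(\top,r,s)=\bot$ for all $r,s\in Q$. The trace relation ${\to_A}\subseteq Q\times\mathsf{Pom}^{\mathsf{sp}}\times Q$ is the smallest relation with: $q\xrightarrow{1}_A q$; $q\xrightarrow{a}_A\delta(q,a)$; $q\xrightarrow{U}_A q''$ and $q''\xrightarrow{V}_A q'$ imply $q\xrightarrow{U\cdot V}_A q'$; $r\xrightarrow{U}_A r'\in F$ and $s\xrightarrow{V}_A s'\in F$ imply $q\xrightarrow{U\parallel V}_A\gamma(q,r,s)$. *)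

From mathcomp Require Import ssreflect ssrfun ssrbool eqtype ssrnat seq fintype.


(* Pomsets are isomorphism classes of finite labelled posets; we work with
   concrete labelled posets and close everything under isomorphism. *)
Record lposet (Sigma : finType) := LPoset {
  lp_car :> finType;
  lp_ord : rel lp_car;
  lp_lab : lp_car -> Sigma;
  lp_refl : reflexive lp_ord;
  lp_antisym : antisymmetric lp_ord;
  lp_trans : transitive lp_ord
}.

Section Pomsets.
Variable Sigma : finType.

Definition lp_iso (U V : lposet Sigma) : Prop :=
  exists f : U -> V, bijective f /\
    (forall x, @lp_lab _ V (f x) = @lp_lab _ U x) /\
    (forall x y, @lp_ord _ V (f x) (f y) = @lp_ord _ U x y).

Definition empty_ord : rel void := fun _ _ => true.
Lemma empty_refl : reflexive empty_ord. Proof. by case. Qed.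
Lemma empty_antisym : antisymmetric empty_ord. Proof. by case. Qed.
Lemma empty_trans : transitive empty_ord. Proof. by case. Qed.
Definition pom_one : lposet Sigma :=
  @LPoset Sigma void empty_ord (fun x => match x with end)
          empty_refl empty_antisym empty_trans.

Definition unit_ord : rel unit := fun _ _ => true.
Lemma unit_refl : reflexive unit_ord. Proof. by []. Qed.
Lemma unit_antisym : antisymmetric unit_ord. Proof. by case; case. Qed.
Lemma unit_trans : transitive unit_ord. Proof. by []. Qed.
Definition pom_atom (a : Sigma) : lposet Sigma :=
  @LPoset Sigma unit unit_ord (fun _ => a) unit_refl unit_antisym unit_trans.

(* sum order: b = true gives sequential (left before right),
   b = false gives parallel (left and right incomparable) *)
Definition sum_ord (U V : lposet Sigma) (b : bool) : rel (U + V)%type :=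
  fun x y => match x, y with
  | inl x, inl y => @lp_ord _ U x y
  | inr x, inr y => @lp_ord _ V x y
  | inl _, inr _ => b
  | inr _, inl _ => false
  end.

Lemma sum_refl U V b : reflexive (sum_ord U V b).
Proof. by case=> x /=; apply: lp_refl. Qed.
Lemma sum_antisym U V b : antisymmetric (sum_ord U V b).
Proof.
case=> x; case=> y //=; rewrite ?andbF //.
- by move/lp_antisym ->.
- by move/lp_antisym ->.
Qed.
Lemma sum_trans U V b : transitive (sum_ord U V b).
Proof.
case=> y; case=> x; case=> z //=; try (by apply: lp_trans); by case: b.
Qed.

Definition sum_lab (U V : lposet Sigma) (x : (U + V)%type) : Sigma :=
  match x with inl x => @lp_lab _ U x | inr x => @lp_lab _ V x end.

Definition pom_seq (U V : lposet Sigma) : lposet Sigma :=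
  @LPoset Sigma (U + V)%type (sum_ord U V true) (sum_lab U V)
          (sum_refl U V true) (sum_antisym U V true) (sum_trans U V true).
Definition pom_par (U V : lposet Sigma) : lposet Sigma :=
  @LPoset Sigma (U + V)%type (sum_ord U V false) (sum_lab U V)
          (sum_refl U V false) (sum_antisym U V false) (sum_trans U V false).

End Pomsets.

Record PA (Sigma : finType) := MkPA {
  pa_Q : Type;
  pa_delta : pa_Q -> Sigma -> pa_Q;
  pa_gamma : pa_Q -> pa_Q -> pa_Q -> pa_Q;
  pa_F : pa_Q -> Prop;
  pa_bot : pa_Q;
  pa_top : pa_Q;
  pa_bot_notF : ~ pa_F pa_bot;
  pa_top_F : pa_F pa_top;
  pa_delta_bot : forall a, pa_delta pa_bot a = pa_bot;
  pa_delta_top : forall a, pa_delta pa_top a = pa_bot;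
  pa_gamma_bot : forall r s, pa_gamma pa_bot r s = pa_bot;
  pa_gamma_top : forall r s, pa_gamma pa_top r s = pa_bot
}.

(* The trace relation q --U-->_A q'.  Since pomsets are isomorphism classes,
   the relation is taken on concrete labelled posets and closed under
   isomorphism (rule tr_iso). *)
Inductive trace (Sigma : finType) (A : PA Sigma)
  : @pa_Q _ A -> lposet Sigma -> @pa_Q _ A -> Prop :=
| tr_one : forall q, trace Sigma A q (pom_one Sigma) q
| tr_atom : forall q a, trace Sigma A q (pom_atom Sigma a) (@pa_delta _ A q a)
| tr_seq : forall q q'' q' U V,
    trace Sigma A q U q'' -> trace Sigma A q'' V q' -> trace Sigma A q (pom_seq Sigma U V) q'
| tr_par : forall q r r' s s' U V,
    trace Sigma A r U r' -> @pa_F _ A r' -> trace Sigma A s V s' -> @pa_F _ A s' ->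
    trace Sigma A q (pom_par Sigma U V) (@pa_gamma _ A q r s)
| tr_iso : forall q q' U V, lp_iso Sigma U V -> trace Sigma A q U q' -> trace Sigma A q V q'.

From mathcomp Require Import ssreflect ssrfun ssrbool eqtype ssrnat seq fintype.

(* The rules for atoms and parallel composition apply
   delta or gamma to the source state, which send both bot and top to bot, and
   bot is absorbing under every rule; so a trace from bot or top either ends in
   bot, or is built from unit and sequencing steps only, in which case its
   pomset is empty and it does not move. *)

Section EmptyPomset.
Variable Sigma : finType.

Lemma lp_iso_oneP (U : lposet Sigma) :
  lp_iso Sigma U (pom_one Sigma) <-> (U -> False).
Proof.
split=> [[f _] x | U0]; first by case: (f x).
exists (fun x => match U0 x with end); split; last by split=> x; case: (U0 x).
by exists (fun v : void => match v with end) => [x|[]]; case: (U0 x).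
Qed.

Lemma lp_iso_empty (U V : lposet Sigma) :
  lp_iso Sigma U V -> (U -> False) -> V -> False.
Proof. by case=> f [[g _ _] _] U0 y; apply: U0 (g y). Qed.

Lemma pom_seq_empty (U V : lposet Sigma) :
  (U -> False) -> (V -> False) -> pom_seq Sigma U V -> False.
Proof. by move=> U0 V0 [x|y]; [apply: U0 x | apply: V0 y]. Qed.

End EmptyPomset.

Lemma trace_from_bot_top {Sigma : finType} {A : PA Sigma}
    {q q' : pa_Q Sigma A} {U : lposet Sigma} :
  trace Sigma A q U q' ->
  q = pa_bot Sigma A \/ q = pa_top Sigma A ->
  q' = pa_bot Sigma A \/ ((U -> False) /\ q' = q).
Proof.
elim=> {q q' U} [q | q a | q q'' q' U V _ IHU _ IHV | q r r' s s' U V _ _ _ _ _ _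
               | q q' U V isoUV _ IH] q_sink.
- by right; split=> [[]|].
- by left; case: q_sink => ->; [apply: pa_delta_bot | apply: pa_delta_top].
- case: (IHU q_sink) => [q''_bot | [U0 q''q]].
  + by case: (IHV (or_introl q''_bot)) => [|[_ ->]]; left.
  + subst q''; case: (IHV q_sink) => [|[V0 ->]]; first by left.
    by right; split=> //; apply: pom_seq_empty.
- by left; case: q_sink => ->; [apply: pa_gamma_bot | apply: pa_gamma_top].
- case: (IH q_sink) => [|[U0 ->]]; first by left.
  by right; split=> //; apply: lp_iso_empty isoUV U0.
Qed.

Theorem mainTheorem5 (Sigma : finType) (A : PA Sigma)
  (q q' : pa_Q Sigma A) (U : lposet Sigma) :
  trace Sigma A q U q' ->
  ~ (lp_iso Sigma U (pom_one Sigma) /\ q' = q) ->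
  (q = pa_bot Sigma A \/ q = pa_top Sigma A) ->
  q' = pa_bot Sigma A.
Proof.
move=> tr nontrivial q_sink.
case: (trace_from_bot_top tr q_sink) => // -[U0 q'q].
by case: nontrivial; split=> //; apply/lp_iso_oneP.
Qed.
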